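(* Let $k\ge4$ be an integer and $\eta\in[\pi/k,\eta_k)$. If $\arg z_{2k-3}\in(0,\eta]$, then $z_{2k-2}\in\triangle(0,z_0,1)$, $z_{2k-1}\in\triangle(0,z_1,z_0)$, $w_{2k-2}\in\triangle(1,w_0,a)$ and $w_{2k-1}\in\triangle(1,w_1,w_0)$. If $\arg z_{2k-3}\in(\eta,2\eta]$, then $z_{2k-2}\in\triangle(0,1,z_{2k-3})$, $z_{2k-1}\in\triangle(0,z_0,1)$, $w_{2k-2}\in\triangle(1,a,w_{2k-3})$ and $w_{2k-1}\in\triangle(1,w_0,a)$.
   Context: For $\eta\in(0,\pi/3)$ let $a=\frac{e^{-i\eta}}{2\cos\eta}$, $c=\frac{1}{1-|a|^4}$, and for integers $j\ge0$ put $z_j=ca^{j+1}$, $w_j=1-c|a|^2a^j$. $\arg$ takes values in $[0,2\pi)$ (under the hypotheses $\arg z_{2k-3}=2\pi-(2k-2)\eta\in(0,2\eta]$). For integers $k\ge1$ let $\Phi_k(\eta)=(1-|a|^4)\sin((k-1)\eta)-|a|^3\sin((k-2)\eta)+|a|^k\sin\eta$; for each $k\ge4$, $\Phi_k$ has a unique zero in $(\pi/k,\pi/(k-1))$, denoted $\eta_k$. $\triangle(u,v,w)$ is the closed solid triangle with vertices $u,v,w$. *)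

From Stdlib Require Import Reals Lra.
From Coquelicot Require Import Coquelicot.
Open Scope R_scope.

Definition cis (t : R) : C := (cos t, sin t).

Definition a_of (eta : R) : C := (cis (- eta) / RtoC (2 * cos eta))%C.

Definition c_of (eta : R) : R := 1 / (1 - Cmod (a_of eta) ^ 4).

Definition z_of (eta : R) (j : nat) : C :=
  (RtoC (c_of eta) * Cpow (a_of eta) (S j))%C.

Definition w_of (eta : R) (j : nat) : C :=
  (RtoC 1 - RtoC (c_of eta * Cmod (a_of eta) ^ 2) * Cpow (a_of eta) j)%C.

Definition Phi (k : nat) (eta : R) : R :=
  let r := Cmod (a_of eta) in
  (1 - r ^ 4) * sin ((INR k - 1) * eta) - r ^ 3 * sin ((INR k - 2) * eta)
  + r ^ k * sin eta.

Definition is_arg (z : C) (theta : R) : Prop :=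
  z <> RtoC 0 /\ 0 <= theta < 2 * PI /\ z = (RtoC (Cmod z) * cis theta)%C.

Definition in_triangle (p u v w : C) : Prop :=
  exists l1 l2 l3 : R, 0 <= l1 /\ 0 <= l2 /\ 0 <= l3 /\ l1 + l2 + l3 = 1 /\
    p = (RtoC l1 * u + RtoC l2 * v + RtoC l3 * w)%C.

(* Put r = |a| = 1/(2 cos eta), so a = r e^{-i eta}, and c = 1/(1 - r^4).  Then
   z_{j+1} = a z_j, and since Re a = 1/2 the similarity z |-> 1 - conj(a) z sends
   z_j to w_j, 0 to 1 and 1 to a: every claim about the w_j is the image of the
   matching claim about the z_j.  Write z_{2k-3} = M e^{i theta}, M = c r^{2k-2}.
   Membership in a triangle with vertex 0 is a sign condition on three cross
   products.  If 0 < theta <= eta, z_{2k-2} = a z_{2k-3} lies in (0, z_0, 1) as soon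
   as M (1 + c r) <= c, which holds once r^4 <= 1/2; multiplying by a (and using
   c >= 1) gives the second inclusion.  If eta < theta <= 2 eta, z_{2k-1} is in the
   first situation with (M r, theta - eta), and z_{2k-2} in (0, 1, z_{2k-3}) amounts
   to M sin eta <= sin (theta + eta).  For k = 4, r^4 < 1/2 comes from
   16 cos^4 eta_4 = 2 (a factorisation of Phi_4) and theta = 2 pi - 6 eta is forced;
   for k >= 5, eta < pi/4 gives r^2 < 1/2 and M < 1/2. *)

From Stdlib Require Import Reals Lra Lia.
From Coquelicot Require Import Coquelicot.
Open Scope R_scope.

Definition polar (m t : R) : C := (m * cos t, m * sin t).

Definition cross (u v : C) : R := fst u * snd v - snd u * fst v.

Lemma cross_polar m s n t : cross (polar m s) (polar n t) = m * n * sin (t - s).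
Proof. unfold cross, polar; simpl. rewrite sin_minus. ring. Qed.

Lemma polar_mul m s n t : (polar m s * polar n t)%C = polar (m * n) (s + t).
Proof.
  unfold polar, Cmult; simpl. rewrite cos_plus, sin_plus.
  apply injective_projections; simpl; ring.
Qed.

Lemma RtoC_mul_polar x m t : (RtoC x * polar m t)%C = polar (x * m) t.
Proof. unfold polar, Cmult, RtoC; apply injective_projections; simpl; ring. Qed.

Lemma RtoC_1_polar : RtoC 1 = polar 1 0.
Proof. unfold polar, RtoC. rewrite cos_0, sin_0. apply injective_projections; simpl; ring. Qed.

Lemma Cpow_polar m t n : Cpow (polar m t) n = polar (m ^ n) (INR n * t).
Proof.
  induction n as [|n IH]; simpl Cpow.
  - replace (INR 0 * t) with 0 by (simpl; ring). exact RtoC_1_polar.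
  - rewrite IH, polar_mul, S_INR. f_equal; ring.
Qed.

Lemma Cmod_polar m t : 0 <= m -> Cmod (polar m t) = m.
Proof.
  intros Hm. unfold Cmod, polar; simpl.
  replace (m * cos t * (m * cos t * 1) + m * sin t * (m * sin t * 1))
    with (m * m * (sin t ^ 2 + cos t ^ 2)) by ring.
  rewrite <- !Rsqr_pow2, sin2_cos2, Rmult_1_r. apply sqrt_square, Hm.
Qed.

Lemma is_arg_polar z theta : is_arg z theta -> z = polar (Cmod z) theta.
Proof.
  intros [_ [_ E]]. rewrite E at 1. unfold cis, polar, Cmult, RtoC.
  apply injective_projections; simpl; ring.
Qed.

Lemma polar_eq_angle m s t : 0 < m -> polar m s = polar m t ->
  cos s = cos t /\ sin s = sin t.
Proof.
  intros Hm E. unfold polar in E. injection E as Ec Es.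
  split; apply (Rmult_eq_reg_l m); lra.
Qed.

(* Cramer's rule gives the barycentric coordinates of [p] with respect to [v] and [w]. *)
Lemma in_triangle_origin p v w : 0 < cross v w -> 0 <= cross p w -> 0 <= cross v p ->
  cross p w + cross v p <= cross v w -> in_triangle p (RtoC 0) v w.
Proof.
  intros Hvw Hpw Hvp Hsum.
  exists ((cross v w - cross p w - cross v p) / cross v w),
    (cross p w / cross v w), (cross v p / cross v w).
  repeat split; try (apply Rdiv_le_0_compat; lra).
  - field; lra.
  - destruct p as [px py], v as [vx vy], w as [wx wy].
    unfold cross in *; simpl in *. unfold Cplus, Cmult, RtoC; simpl.
    apply injective_projections; simpl; field; lra.
Qed.

Lemma in_triangle_affine (s m p u v w : C) : in_triangle p u v w ->
  in_triangle (s + m * p) (s + m * u) (s + m * v) (s + m * w).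
Proof.
  intros (l1 & l2 & l3 & H1 & H2 & H3 & Hsum & ->).
  exists l1, l2, l3. repeat split; auto.
  replace s with (RtoC (l1 + l2 + l3) * s)%C at 1 by (rewrite Hsum; ring).
  rewrite !RtoC_plus. ring.
Qed.

Lemma in_triangle_mulr (m p u v w : C) : in_triangle p u v w ->
  in_triangle (p * m) (u * m) (v * m) (w * m).
Proof.
  intros H. assert (E : forall x, (x * m = 0 + m * x)%C) by (intros; ring).
  rewrite !E. now apply in_triangle_affine.
Qed.

Lemma in_triangle_scale_vertex p v w s : 1 <= s -> in_triangle p (RtoC 0) v w ->
  in_triangle p (RtoC 0) v (RtoC s * w).
Proof.
  intros Hs (l1 & l2 & l3 & H1 & H2 & H3 & Hsum & ->).
  exists (1 - l2 - l3 / s), l2, (l3 / s). repeat split; auto.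
  - assert (l3 / s <= l3); [|lra].
    apply Rmult_le_reg_r with s; [lra|]. field_simplify; nra.
  - apply Rdiv_le_0_compat; lra.
  - ring.
  - destruct v as [vx vy], w as [wx wy]. unfold Cplus, Cmult, RtoC; simpl.
    apply injective_projections; simpl; field; lra.
Qed.

Section Rotation.

Variables eta r c : R.
Hypothesis eta_range : 0 < eta < PI / 3.
Hypothesis r_def : r * (2 * cos eta) = 1.
Hypothesis c_ge1 : 1 <= c.

Let sin_eta_pos : 0 < sin eta.
Proof. apply sin_gt_0; lra. Qed.

Let r_range : 0 < r < 1.
Proof.
  assert (1 / 2 < cos eta) by (rewrite <- cos_PI3; apply cos_decreasing_1; lra).
  nra.
Qed.

Lemma rotated_in_triangle_0_ca_1 m phi : 0 <= m -> 0 <= phi <= eta -> m * (1 + c * r) <= c ->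
  in_triangle (polar m phi * polar r (- eta)) (RtoC 0) (RtoC c * polar r (- eta)) (RtoC 1).
Proof.
  intros Hm Hphi Hmc.
  assert (E1 : 0 - - eta = eta) by ring.
  assert (E2 : 0 - (phi + - eta) = eta - phi) by ring.
  assert (E3 : phi + - eta - - eta = phi) by ring.
  assert (0 <= sin phi <= sin eta) by (split; [apply sin_ge_0 | apply sin_incr_1]; lra).
  assert (0 <= sin (eta - phi) <= sin eta) by (split; [apply sin_ge_0 | apply sin_incr_1]; lra).
  pose proof r_range. pose proof sin_eta_pos.
  assert (0 < c * r) by nra. assert (0 <= m * r) by nra.
  assert (0 <= c * r * (m * r)) by nra.
  assert (m * sin (eta - phi) + c * m * r * sin phi <= c * sin eta).
  { assert (m * sin (eta - phi) <= m * sin eta) by (apply Rmult_le_compat_l; lra).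
    assert (c * r * m * sin phi <= c * r * m * sin eta) by (apply Rmult_le_compat_l; nra).
    assert (sin eta * (m * (1 + c * r)) <= sin eta * c) by (apply Rmult_le_compat_l; lra).
    nra. }
  rewrite polar_mul, RtoC_mul_polar, RtoC_1_polar.
  apply in_triangle_origin; rewrite !cross_polar, ?E1, ?E2, ?E3; nra.
Qed.

Lemma rotated_in_triangle_0_1_self m theta : 0 < m -> eta <= theta <= 2 * eta ->
  m * sin eta <= sin (theta + eta) ->
  in_triangle (polar m theta * polar r (- eta)) (RtoC 0) (RtoC 1) (polar m theta).
Proof.
  intros Hm Htheta Hsin.
  assert (E1 : theta - 0 = theta) by ring.
  assert (E2 : theta - (theta + - eta) = eta) by ring.
  assert (E3 : theta + - eta - 0 = theta - eta) by ring.
  assert (Hsum : sin theta = r * (sin (theta + eta) + sin (theta - eta))).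
  { rewrite sin_plus, sin_minus.
    transitivity (r * (2 * cos eta) * sin theta); [rewrite r_def|]; ring. }
  assert (0 < sin theta) by (apply sin_gt_0; lra).
  assert (0 <= sin (theta - eta)) by (apply sin_ge_0; lra).
  pose proof r_range. pose proof sin_eta_pos.
  assert (0 < m * r) by nra. assert (0 <= m * r * m) by nra.
  assert (m * r * (m * sin eta) <= m * r * sin (theta + eta)) by (apply Rmult_le_compat_l; lra).
  rewrite polar_mul, RtoC_1_polar.
  apply in_triangle_origin; rewrite !cross_polar, ?E1, ?E2, ?E3; nra.
Qed.

Lemma small_arg_rotated_triangles m theta : 0 <= m -> 0 <= theta <= eta -> m * (1 + c * r) <= c ->
  in_triangle (polar m theta * polar r (- eta)) (RtoC 0) (RtoC c * polar r (- eta)) (RtoC 1) /\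
  in_triangle (polar m theta * polar r (- eta) * polar r (- eta)) (RtoC 0)
    (RtoC c * polar r (- eta) * polar r (- eta)) (RtoC c * polar r (- eta)).
Proof.
  intros Hm Htheta Hmc.
  pose proof (rotated_in_triangle_0_ca_1 m theta Hm Htheta Hmc) as Hrot.
  split; [exact Hrot|].
  apply (in_triangle_scale_vertex _ _ _ c c_ge1) in Hrot.
  apply (in_triangle_mulr (polar r (- eta))) in Hrot.
  now rewrite Cmult_0_l, Cmult_1_r in Hrot.
Qed.

Lemma large_arg_rotated_triangles m theta : 0 < m -> eta <= theta <= 2 * eta ->
  m * (1 + c * r) <= c -> m * sin eta <= sin (theta + eta) ->
  in_triangle (polar m theta * polar r (- eta)) (RtoC 0) (RtoC 1) (polar m theta) /\
  in_triangle (polar m theta * polar r (- eta) * polar r (- eta)) (RtoC 0)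
    (RtoC c * polar r (- eta)) (RtoC 1).
Proof.
  intros Hm Htheta Hmc Hsin. split.
  - now apply rotated_in_triangle_0_1_self.
  - rewrite (polar_mul m theta). pose proof r_range.
    apply rotated_in_triangle_0_ca_1; [nra | lra | nra].
Qed.

End Rotation.

Lemma pow_le_pow_of_le_1 x m n : 0 <= x <= 1 -> (m <= n)%nat -> x ^ n <= x ^ m.
Proof.
  intros Hx Hmn. replace n with (m + (n - m))%nat by lia. rewrite pow_add.
  assert (0 <= x ^ m) by (apply pow_le; lra).
  assert (x ^ (n - m) <= 1) by (rewrite <- (pow1 (n - m)); apply pow_incr; lra).
  nra.
Qed.

Lemma pow6_mul_le_1 r c : 0 < r -> r ^ 4 <= 1 / 2 -> c * (1 - r ^ 4) = 1 ->
  r ^ 6 * (1 + c * r) <= 1.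
Proof.
  intros Hr Hr4 Hc.
  assert (Hu : 0 < r ^ 4) by (apply pow_lt; lra).
  assert (Hy : 0 < r ^ 3) by (apply pow_lt; lra).
  assert (Hy35 : r ^ 3 <= 3 / 5).
  { destruct (Rle_or_lt (r ^ 3) (3 / 5)) as [|Hgt]; [assumption|exfalso].
    assert ((3 / 5) ^ 4 <= (r ^ 3) ^ 4) by (apply pow_incr; lra).
    assert ((r ^ 4) ^ 3 <= (1 / 2) ^ 3) by (apply pow_incr; lra).
    replace ((r ^ 3) ^ 4) with ((r ^ 4) ^ 3) in * by ring. lra. }
  assert (r ^ 4 * r ^ 3 <= (1 - r ^ 4) * (1 - r ^ 3 * r ^ 3)) by nra.
  assert (c * (r ^ 4 * r ^ 3) <= c * ((1 - r ^ 4) * (1 - r ^ 3 * r ^ 3)))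
    by (apply Rmult_le_compat_l; nra).
  nra.
Qed.

Lemma inv_sqrt2_pos : 0 < 1 / sqrt 2.
Proof. apply Rdiv_lt_0_compat; [lra | apply sqrt_lt_R0; lra]. Qed.

Lemma inv_sqrt2_sq : 1 / sqrt 2 * (1 / sqrt 2) = 1 / 2.
Proof.
  assert (0 < sqrt 2) by (apply sqrt_lt_R0; lra).
  replace (1 / sqrt 2 * (1 / sqrt 2)) with (1 / (sqrt 2 * sqrt 2)) by (field; lra).
  rewrite sqrt_sqrt; lra.
Qed.

Lemma sin_ge_inv_sqrt2 x : PI / 4 <= x <= 3 * (PI / 4) -> 1 / sqrt 2 <= sin x.
Proof.
  intros Hx. pose proof PI_RGT_0. rewrite <- sin_PI4.
  destruct (Rle_or_lt x (PI / 2)).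
  - apply sin_incr_1; lra.
  - rewrite <- (sin_PI_x x). apply sin_incr_1; lra.
Qed.

Lemma c_pow6_lt_inv_sqrt2 r c : 0 < r -> r ^ 4 < 1 / 2 -> c * (1 - r ^ 4) = 1 -> c * r ^ 6 < 1 / sqrt 2.
Proof.
  intros Hr Hr4 Hc.
  pose proof inv_sqrt2_pos as Hq0. pose proof inv_sqrt2_sq as Hqq.
  set (q := 1 / sqrt 2) in *.
  set (t := r ^ 2).
  assert (Ht : 0 < t) by (apply pow_lt; lra).
  assert (Htq : t < q) by (replace (r ^ 4) with (t * t) in Hr4 by (unfold t; ring); nra).
  assert (Htt : t * t < 1 / 2) by nra.
  assert (t * t * t < q * (1 / 2)) by nra.
  assert (t * t * t + q * (t * t) < q) by nra.
  replace (r ^ 6) with (t * t * t) by (unfold t; ring).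
  replace (r ^ 4) with (t * t) in Hc by (unfold t; ring).
  nra.
Qed.

Lemma c_pow8_lt_half r c : 0 < r -> r ^ 2 < 1 / 2 -> c * (1 - r ^ 4) = 1 -> c * r ^ 8 < 1 / 2.
Proof.
  intros Hr Hr2 Hc.
  assert (Ht : 0 < r ^ 2) by (apply pow_lt; lra).
  replace (r ^ 8) with ((r ^ 2) ^ 4) by ring.
  replace (r ^ 4) with ((r ^ 2) ^ 2) in Hc by ring.
  set (t := r ^ 2) in *.
  assert (Ht2 : t ^ 2 < 1 / 4) by nra.
  assert (Hc0 : 0 < c) by nra.
  assert (Hc43 : c < 4 / 3) by nra.
  assert (t ^ 4 < 1 / 16) by (replace (t ^ 4) with (t ^ 2 * t ^ 2) by ring; nra).
  assert (0 < t ^ 4) by (apply pow_lt; lra).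
  nra.
Qed.

Lemma a_of_polar eta : 0 < cos eta -> a_of eta = polar (/ (2 * cos eta)) (- eta).
Proof.
  intros H. unfold a_of, cis, polar, Cdiv, Cmult, Cinv, RtoC; simpl.
  rewrite cos_neg, sin_neg. apply injective_projections; simpl; field; lra.
Qed.

Lemma Cmod_a_of eta : 0 < cos eta -> Cmod (a_of eta) = / (2 * cos eta).
Proof.
  intros H. rewrite a_of_polar by exact H.
  apply Cmod_polar, Rlt_le, Rinv_0_lt_compat. lra.
Qed.

Lemma z_of_S eta j : z_of eta (S j) = (z_of eta j * a_of eta)%C.
Proof. unfold z_of. simpl Cpow. ring. Qed.

Lemma z_of_0 eta : z_of eta 0 = (RtoC (c_of eta) * a_of eta)%C.
Proof. unfold z_of. simpl Cpow. ring. Qed.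

Lemma Cmod_z_of eta j : 0 <= c_of eta ->
  Cmod (z_of eta j) = c_of eta * Cmod (a_of eta) ^ S j.
Proof.
  intros Hc. unfold z_of. now rewrite Cmod_mult, Cmod_pow, Cmod_R, Rabs_pos_eq.
Qed.

Lemma z_of_polar eta j : 0 < cos eta -> 0 <= c_of eta ->
  z_of eta j = polar (Cmod (z_of eta j)) (- (INR (S j) * eta)).
Proof.
  intros Hcos Hc. rewrite Cmod_z_of, Cmod_a_of by assumption.
  unfold z_of. rewrite a_of_polar, Cpow_polar, RtoC_mul_polar by assumption.
  f_equal. ring.
Qed.

Definition z_to_w (eta : R) (z : C) : C := (RtoC 1 - Cconj (a_of eta) * z)%C.

Lemma w_of_z_to_w eta j : w_of eta j = z_to_w eta (z_of eta j).
Proof.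
  unfold w_of, z_to_w, z_of. rewrite RtoC_mult, Cmod2_conj. simpl Cpow. ring.
Qed.

Lemma z_to_w_0 eta : z_to_w eta (RtoC 0) = RtoC 1.
Proof. unfold z_to_w. ring. Qed.

Lemma z_to_w_1 eta : 0 < cos eta -> z_to_w eta (RtoC 1) = a_of eta.
Proof.
  intros H. unfold z_to_w. rewrite a_of_polar by exact H.
  unfold Cconj, polar, Cminus, Cplus, Copp, Cmult, RtoC; simpl.
  rewrite cos_neg, sin_neg. apply injective_projections; simpl; field; lra.
Qed.

Lemma in_triangle_z_to_w eta p u v w : in_triangle p u v w ->
  in_triangle (z_to_w eta p) (z_to_w eta u) (z_to_w eta v) (z_to_w eta w).
Proof.
  assert (E : forall x, z_to_w eta x = (RtoC 1 + - Cconj (a_of eta) * x)%C)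
    by (intros; unfold z_to_w; ring).
  rewrite !E. apply in_triangle_affine.
Qed.

Section Sequence.

Variable eta : R.
Hypothesis eta_range : 0 < eta < PI / 3.

Let cos_gt_half : 1 / 2 < cos eta.
Proof. rewrite <- cos_PI3. apply cos_decreasing_1; lra. Qed.

Let r_range : 0 < Cmod (a_of eta) < 1.
Proof.
  rewrite Cmod_a_of by lra. split.
  - apply Rinv_0_lt_compat; lra.
  - rewrite <- Rinv_1. apply Rinv_lt_contravar; lra.
Qed.

Let r4_range : 0 <= Cmod (a_of eta) ^ 4 < 1.
Proof. apply pow_lt_1_compat; [lra | lia]. Qed.

Let c_inv : c_of eta * (1 - Cmod (a_of eta) ^ 4) = 1.
Proof. unfold c_of. field. lra. Qed.

Let c_ge1 : 1 <= c_of eta.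
Proof. nra. Qed.

Lemma small_arg_z_w_triangles j theta :
  is_arg (z_of eta j) theta -> 0 < theta <= eta ->
  Cmod (z_of eta j) * (1 + c_of eta * Cmod (a_of eta)) <= c_of eta ->
  in_triangle (z_of eta (S j)) (RtoC 0) (z_of eta 0) (RtoC 1) /\
  in_triangle (z_of eta (S (S j))) (RtoC 0) (z_of eta 1) (z_of eta 0) /\
  in_triangle (w_of eta (S j)) (RtoC 1) (w_of eta 0) (a_of eta) /\
  in_triangle (w_of eta (S (S j))) (RtoC 1) (w_of eta 1) (w_of eta 0).
Proof.
  intros Harg Htheta HM.
  assert (Hz : in_triangle (z_of eta (S j)) (RtoC 0) (z_of eta 0) (RtoC 1) /\
               in_triangle (z_of eta (S (S j))) (RtoC 0) (z_of eta 1) (z_of eta 0)).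
  { rewrite Cmod_a_of in HM by lra.
    rewrite !z_of_S, z_of_0, (is_arg_polar _ _ Harg), a_of_polar by lra.
    apply small_arg_rotated_triangles; try lra; [field; lra | apply Cmod_ge_0]. }
  destruct Hz as [Hz1 Hz2]. do 2 (split; [assumption|]).
  rewrite <- (z_to_w_0 eta), <- (z_to_w_1 eta), !w_of_z_to_w by lra.
  split; now apply in_triangle_z_to_w.
Qed.

Lemma large_arg_z_w_triangles j theta :
  is_arg (z_of eta j) theta -> eta < theta <= 2 * eta ->
  Cmod (z_of eta j) * (1 + c_of eta * Cmod (a_of eta)) <= c_of eta ->
  Cmod (z_of eta j) * sin eta <= sin (theta + eta) ->
  in_triangle (z_of eta (S j)) (RtoC 0) (RtoC 1) (z_of eta j) /\
  in_triangle (z_of eta (S (S j))) (RtoC 0) (z_of eta 0) (RtoC 1) /\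
  in_triangle (w_of eta (S j)) (RtoC 1) (a_of eta) (w_of eta j) /\
  in_triangle (w_of eta (S (S j))) (RtoC 1) (w_of eta 0) (a_of eta).
Proof.
  intros Harg Htheta HM Hsin.
  assert (Hz : in_triangle (z_of eta (S j)) (RtoC 0) (RtoC 1) (z_of eta j) /\
               in_triangle (z_of eta (S (S j))) (RtoC 0) (z_of eta 0) (RtoC 1)).
  { assert (0 < Cmod (z_of eta j)) by (apply Cmod_gt_0, Harg).
    rewrite Cmod_a_of in HM by lra.
    rewrite !z_of_S, z_of_0, (is_arg_polar _ _ Harg), a_of_polar by lra.
    apply large_arg_rotated_triangles; try lra. field; lra. }
  destruct Hz as [Hz1 Hz2]. do 2 (split; [assumption|]).
  rewrite <- (z_to_w_0 eta), <- (z_to_w_1 eta), !w_of_z_to_w by lra.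
  split; now apply in_triangle_z_to_w.
Qed.

Lemma Cmod_z_of_mul_le j : (5 <= j)%nat -> Cmod (a_of eta) ^ 4 <= 1 / 2 ->
  Cmod (z_of eta j) * (1 + c_of eta * Cmod (a_of eta)) <= c_of eta.
Proof.
  intros Hj Hr4. rewrite Cmod_z_of by lra.
  set (r := Cmod (a_of eta)) in *. set (c := c_of eta) in *.
  assert (r ^ S j <= r ^ 6) by (apply pow_le_pow_of_le_1; [lra | lia]).
  pose proof (pow6_mul_le_1 r c ltac:(lra) Hr4 c_inv).
  assert (0 <= 1 + c * r) by nra.
  assert (r ^ S j * (1 + c * r) <= r ^ 6 * (1 + c * r)) by (apply Rmult_le_compat_r; lra).
  assert (c * (r ^ S j * (1 + c * r)) <= c * 1) by (apply Rmult_le_compat_l; lra).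
  lra.
Qed.

Lemma Cmod_a_of_sq_lt_half : eta < PI / 4 -> Cmod (a_of eta) ^ 2 < 1 / 2.
Proof.
  intros H4. rewrite Cmod_a_of by lra.
  assert (1 / sqrt 2 < cos eta) by (rewrite <- cos_PI4; apply cos_decreasing_1; lra).
  assert (1 / 2 < cos eta ^ 2) by (pose proof inv_sqrt2_sq; pose proof inv_sqrt2_pos; nra).
  replace ((/ (2 * cos eta)) ^ 2) with (/ (4 * cos eta ^ 2)) by (field; lra).
  replace (1 / 2) with (/ 2) by field.
  apply Rinv_lt_contravar; nra.
Qed.

Lemma large_arg_sin_bound_k4 theta : PI / 4 <= eta -> Cmod (a_of eta) ^ 4 < 1 / 2 ->
  is_arg (z_of eta 5) theta -> Cmod (z_of eta 5) * sin eta <= sin (theta + eta).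
Proof.
  intros H4 Hr4 Harg.
  assert (HM : 0 < Cmod (z_of eta 5)) by (apply Cmod_gt_0, Harg).
  assert (E : polar (Cmod (z_of eta 5)) theta
              = polar (Cmod (z_of eta 5)) (- (INR 6 * eta))).
  { rewrite <- (is_arg_polar _ _ Harg). apply z_of_polar; lra. }
  destruct (polar_eq_angle _ _ _ HM E) as [Ecos Esin].
  assert (Hsum : sin (theta + eta) = sin (5 * eta - PI)).
  { rewrite sin_plus, Ecos, Esin, <- sin_plus, sin_minus, sin_PI, cos_PI.
    replace (- (INR 6 * eta) + eta) with (- (5 * eta)) by (simpl; ring).
    rewrite sin_neg. ring. }
  assert (1 / sqrt 2 <= sin (theta + eta)) by (rewrite Hsum; apply sin_ge_inv_sqrt2; lra).
  assert (Cmod (z_of eta 5) < 1 / sqrt 2).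
  { rewrite Cmod_z_of by lra. apply c_pow6_lt_inv_sqrt2; lra. }
  assert (sin eta <= 1) by apply SIN_bound.
  assert (0 < sin eta) by (apply sin_gt_0; lra).
  nra.
Qed.

Lemma large_arg_sin_bound_k_ge5 j theta : eta < PI / 4 -> (7 <= j)%nat ->
  eta <= theta <= 2 * eta -> Cmod (z_of eta j) * sin eta <= sin (theta + eta).
Proof.
  intros H4 Hj Htheta.
  pose proof (Cmod_a_of_sq_lt_half H4) as Hr2.
  rewrite Cmod_z_of by lra.
  set (r := Cmod (a_of eta)) in *. set (c := c_of eta) in *.
  assert (r ^ S j <= r ^ 8) by (apply pow_le_pow_of_le_1; [lra | lia]).
  assert (c * r ^ 8 < 1 / 2) by (apply c_pow8_lt_half; lra).
  assert (c * r ^ S j < 1 / 2) by nra.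
  assert (0 < sin eta) by (apply sin_gt_0; lra).
  assert (sin eta <= sin theta) by (apply sin_incr_1; lra).
  assert (0 <= cos theta) by (apply cos_ge_0; lra).
  rewrite sin_plus. nra.
Qed.

End Sequence.

Lemma Phi4_factor x : 0 < cos x ->
  Phi 4 x * (16 * cos x ^ 4) = sin x * (4 * cos x ^ 2 - 1) * (16 * cos x ^ 4 - 2).
Proof.
  intros H. unfold Phi. rewrite Cmod_a_of by exact H.
  replace ((INR 4 - 1) * x) with (x + (x + x)) by (simpl; ring).
  replace ((INR 4 - 2) * x) with (x + x) by (simpl; ring).
  rewrite !sin_plus, !cos_plus.
  assert (E : sin x ^ 2 = 1 - cos x ^ 2) by (rewrite <- !Rsqr_pow2; pose proof (sin2_cos2 x); lra).
  field_simplify; [|lra].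
  replace (sin x ^ 3) with (sin x * sin x ^ 2) by ring.
  rewrite E. field.
Qed.

Lemma Phi4_root x : 0 < x < PI / 3 -> Phi 4 x = 0 -> 16 * cos x ^ 4 = 2.
Proof.
  intros Hx HPhi.
  assert (1 / 2 < cos x) by (rewrite <- cos_PI3; apply cos_decreasing_1; lra).
  assert (0 < sin x) by (apply sin_gt_0; lra).
  pose proof (Phi4_factor x ltac:(lra)) as E. rewrite HPhi, Rmult_0_l in E.
  assert (0 < sin x * (4 * cos x ^ 2 - 1)) by (apply Rmult_lt_0_compat; nra).
  nra.
Qed.

Lemma eta_pos_lt_PI3 k etak eta : (4 <= k)%nat ->
  PI / INR k <= eta < etak -> etak < PI / (INR k - 1) -> 0 < eta < PI / 3.
Proof.
  intros Hk Heta Hetak.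
  assert (Hk4 : 4 <= INR k) by (pose proof (le_INR 4 k Hk); simpl in *; lra).
  pose proof PI_RGT_0.
  assert (0 < PI / INR k) by (apply Rdiv_lt_0_compat; lra).
  assert (PI / (INR k - 1) <= PI / 3).
  { apply Rmult_le_compat_l; [lra|]. apply Rinv_le_contravar; lra. }
  lra.
Qed.

Lemma eta_lt_PI4 k eta : (5 <= k)%nat -> eta < PI / (INR k - 1) -> eta < PI / 4.
Proof.
  intros Hk Heta.
  assert (Hk5 : 5 <= INR k) by (pose proof (le_INR 5 k Hk); simpl in *; lra).
  pose proof PI_RGT_0.
  assert (PI / (INR k - 1) <= PI / 4).
  { apply Rmult_le_compat_l; [lra|]. apply Rinv_le_contravar; lra. }
  lra.
Qed.

Lemma Cmod_a_of_pow4_lt k etak eta : (4 <= k)%nat ->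
  PI / INR k <= eta < etak -> etak < PI / (INR k - 1) -> Phi k etak = 0 ->
  Cmod (a_of eta) ^ 4 < 1 / 2.
Proof.
  intros Hk Heta Hetak HPhi.
  pose proof (eta_pos_lt_PI3 k etak eta Hk Heta Hetak) as Heta3.
  destruct (Nat.eq_dec k 4) as [->|Hk5].
  - assert (Hetak3 : 0 < etak < PI / 3) by (simpl in Hetak; lra).
    pose proof (Phi4_root etak Hetak3 HPhi) as Hroot.
    assert (0 < cos etak) by (apply cos_gt_0; lra).
    assert (cos etak < cos eta) by (apply cos_decreasing_1; lra).
    assert (cos etak ^ 2 < cos eta ^ 2) by nra.
    assert (2 < 16 * cos eta ^ 4) by nra.
    rewrite Cmod_a_of by lra.
    replace ((/ (2 * cos eta)) ^ 4) with (/ (16 * cos eta ^ 4)) by (field; lra).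
    replace (1 / 2) with (/ 2) by field.
    apply Rinv_lt_contravar; lra.
  - assert (H4 : eta < PI / 4) by (apply (eta_lt_PI4 k); [lia | lra]).
    pose proof (Cmod_a_of_sq_lt_half eta Heta3 H4) as Hr2.
    assert (0 <= Cmod (a_of eta) ^ 2) by (apply pow_le, Cmod_ge_0).
    replace (Cmod (a_of eta) ^ 4) with ((Cmod (a_of eta) ^ 2) ^ 2) by ring.
    nra.
Qed.

Lemma large_arg_sin_bound k etak eta theta : (4 <= k)%nat ->
  PI / INR k <= eta < etak -> etak < PI / (INR k - 1) -> Cmod (a_of eta) ^ 4 < 1 / 2 ->
  is_arg (z_of eta (2 * k - 3)) theta -> eta < theta <= 2 * eta ->
  Cmod (z_of eta (2 * k - 3)) * sin eta <= sin (theta + eta).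
Proof.
  intros Hk Heta Hetak Hr4 Harg Htheta.
  pose proof (eta_pos_lt_PI3 k etak eta Hk Heta Hetak) as Heta3.
  destruct (Nat.eq_dec k 4) as [->|Hk5].
  - apply large_arg_sin_bound_k4; auto. simpl in Heta. lra.
  - apply large_arg_sin_bound_k_ge5; [assumption | | lia | lra].
    apply (eta_lt_PI4 k); [lia | lra].
Qed.

Theorem lemma6p4 (k : nat) (etak eta : R) :
  (4 <= k)%nat ->
  (* etak is the unique zero of Phi_k in (pi/k, pi/(k-1)) *)
  PI / INR k < etak < PI / (INR k - 1) ->
  Phi k etak = 0 ->
  (forall x, PI / INR k < x < PI / (INR k - 1) -> Phi k x = 0 -> x = etak) ->
  PI / INR k <= eta < etak ->
  ((exists th, is_arg (z_of eta (2 * k - 3)) th /\ 0 < th <= eta) ->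
     in_triangle (z_of eta (2 * k - 2)) (RtoC 0) (z_of eta 0) (RtoC 1) /\
     in_triangle (z_of eta (2 * k - 1)) (RtoC 0) (z_of eta 1) (z_of eta 0) /\
     in_triangle (w_of eta (2 * k - 2)) (RtoC 1) (w_of eta 0) (a_of eta) /\
     in_triangle (w_of eta (2 * k - 1)) (RtoC 1) (w_of eta 1) (w_of eta 0)) /\
  ((exists th, is_arg (z_of eta (2 * k - 3)) th /\ eta < th <= 2 * eta) ->
     in_triangle (z_of eta (2 * k - 2)) (RtoC 0) (RtoC 1) (z_of eta (2 * k - 3)) /\
     in_triangle (z_of eta (2 * k - 1)) (RtoC 0) (z_of eta 0) (RtoC 1) /\
     in_triangle (w_of eta (2 * k - 2)) (RtoC 1) (a_of eta) (w_of eta (2 * k - 3)) /\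
     in_triangle (w_of eta (2 * k - 1)) (RtoC 1) (w_of eta 0) (a_of eta)).
Proof.
  intros Hk Hetak HPhi _ Heta.
  assert (Heta3 : 0 < eta < PI / 3) by (apply (eta_pos_lt_PI3 k etak); tauto).
  assert (Hr4 : Cmod (a_of eta) ^ 4 < 1 / 2) by (apply (Cmod_a_of_pow4_lt k etak); tauto).
  assert (HM : Cmod (z_of eta (2 * k - 3)) * (1 + c_of eta * Cmod (a_of eta)) <= c_of eta)
    by (apply Cmod_z_of_mul_le; [assumption | lia | lra]).
  replace (2 * k - 2)%nat with (S (2 * k - 3)) by lia.
  replace (2 * k - 1)%nat with (S (S (2 * k - 3))) by lia.
  split; intros [theta [Harg Htheta]].
  - now apply small_arg_z_w_triangles with theta.
  - apply large_arg_z_w_triangles with theta; try assumption.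
    now apply (large_arg_sin_bound k etak).
Qed.
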